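(* Let $(\mathfrak g,\cdot)$ be a perm algebra, $\omega\in(\mathfrak g\otimes\mathfrak g)^*$ symmetric such that $(\mathfrak g,\cdot,\omega)$ is a symplectic perm algebra, and $r=\sum r^1\otimes r^2\in\mathfrak g\otimes\mathfrak g$ symmetric. Assume (i) $r$ satisfies the classical perm Yang–Baxter equation $r_{13}r_{12}-r_{13}r_{23}+r_{23}r_{12}-r_{12}r_{23}=0$ in $(\mathfrak g,\cdot)$ (so $(\mathfrak g,\cdot,r,\Delta_r)$ is a quasitriangular perm bialgebra), and (ii) $\omega$ satisfies the classical co-perm Yang–Baxter equation in the perm coalgebra $(\mathfrak g,\Delta_r)$ (so $(\mathfrak g,\Delta_r,\omega,\cdot_\omega)$ is a dual quasitriangular perm bialgebra). Then $N:\mathfrak g\to\mathfrak g$, $N(x)=\omega(x,r^1)r^2$, is a Nijenhuis operator on $(\mathfrak g,\cdot)$, i.e. $N(x)N(y)+N^2(xy)=N(N(x)y)+N(xN(y))$ for all $x,y$.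
   Context: Over a field $K$. A (right) perm algebra: bilinear product with $(xy)z=x(yz)=x(zy)$. $(\mathfrak g,\cdot,\omega)$ symplectic: $\omega$ symmetric and $\omega(xy,z)+\omega(xz,y)=\omega(zx,y)+\omega(zy,x)$ for all $x,y,z$. For $r$ with second copy $\bar r$: $\Delta_r(x)=xr^1\otimes r^2+r^1\otimes xr^2-r^1\otimes r^2x$ (Sweedler notation $\Delta_r(x)=x_{(1)}\otimes x_{(2)}$); $r_{13}r_{12}=r^1\bar r^1\otimes\bar r^2\otimes r^2$, $r_{13}r_{23}=r^1\otimes\bar r^1\otimes r^2\bar r^2$, $r_{23}r_{12}=\bar r^1\otimes r^1\bar r^2\otimes r^2$, $r_{12}r_{23}=r^1\otimes r^2\bar r^1\otimes\bar r^2$. Classical co-perm Yang–Baxter equation in $(\mathfrak g,\Delta)$: $\omega(x_{(1)},z)\omega(x_{(2)},y)-\omega(x,z_{(1)})\omega(y,z_{(2)})+\omega(y_{(1)},z)\omega(x,y_{(2)})-\omega(x,y_{(1)})\omega(y_{(2)},z)=0$ for all $x,y,z$; $\cdot_\omega$ is $x\cdot_\omega y=x_{(1)}\omega(x_{(2)},y)+y_{(1)}\omega(x,y_{(2)})-y_{(2)}\omega(x,y_{(1)})$. *)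

(* The perm algebra g is modelled as K^n = 'rV[K]_n
   (finite dimensional), with standard basis e i.  Tensors in g(x)g are
   encoded by their coefficient matrices in the basis e_i (x) e_j, and
   3-tensors by their coefficient functions. *)
From mathcomp Require Import all_boot all_order all_algebra.
Set Implicit Arguments. Unset Strict Implicit. Unset Printing Implicit Defensive.
Import GRing.Theory.
Local Open Scope ring_scope.

Section PermDefs.
Variables (K : fieldType) (n : nat).
Notation V := 'rV[K]_n.

Definition e (i : 'I_n) : V := delta_mx 0 i.

Definition bilinear_prod (mul : V -> V -> V) : Prop :=
  (forall (a : K) (x y z : V), mul (a *: x + y) z = a *: mul x z + mul y z) /\
  (forall (a : K) (x y z : V), mul x (a *: y + z) = a *: mul x y + mul x z).

Definition perm_algebra (mul : V -> V -> V) : Prop :=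
  bilinear_prod mul /\
  (forall x y z, mul (mul x y) z = mul x (mul y z)) /\
  (forall x y z, mul x (mul y z) = mul x (mul z y)).

Definition bform (W : 'M[K]_n) (x y : V) : K := (x *m W *m y^T) 0 0.

Definition symplectic (mul : V -> V -> V) (W : 'M[K]_n) : Prop :=
  W^T = W /\
  forall x y z,
    bform W (mul x y) z + bform W (mul x z) y =
    bform W (mul z x) y + bform W (mul z y) x.

Definition t3 (x y z : V) (p q s : 'I_n) : K := x 0 p * y 0 q * z 0 s.

(* r = \sum_{a,b} R a b e_a (x) e_b, \bar r a second copy *)
Definition r13r12 mul (R : 'M[K]_n) p q s : K :=
  \sum_a \sum_b \sum_c \sum_d
     R a b * R c d * t3 (mul (e a) (e c)) (e d) (e b) p q s.
Definition r13r23 mul (R : 'M[K]_n) p q s : K :=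
  \sum_a \sum_b \sum_c \sum_d
     R a b * R c d * t3 (e a) (e c) (mul (e b) (e d)) p q s.
Definition r23r12 mul (R : 'M[K]_n) p q s : K :=
  \sum_a \sum_b \sum_c \sum_d
     R a b * R c d * t3 (e c) (mul (e a) (e d)) (e b) p q s.
Definition r12r23 mul (R : 'M[K]_n) p q s : K :=
  \sum_a \sum_b \sum_c \sum_d
     R a b * R c d * t3 (e a) (mul (e b) (e c)) (e d) p q s.

Definition CPYBE mul (R : 'M[K]_n) : Prop :=
  forall p q s,
    r13r12 mul R p q s - r13r23 mul R p q s + r23r12 mul R p q s
      - r12r23 mul R p q s = 0.

(* Sweedler evaluation: for f bilinear, Delta_ev mul R x f = f(x_(1), x_(2))
   where Delta_r(x) = x r^1 (x) r^2 + r^1 (x) x r^2 - r^1 (x) r^2 x. *)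
Definition Delta_ev mul (R : 'M[K]_n) (x : V) (f : V -> V -> K) : K :=
  \sum_a \sum_b R a b *
     (f (mul x (e a)) (e b) + f (e a) (mul x (e b)) - f (e a) (mul (e b) x)).

Definition CcoPYBE mul (R W : 'M[K]_n) : Prop :=
  forall x y z,
    Delta_ev mul R x (fun u v => bform W u z * bform W v y)
    - Delta_ev mul R z (fun u v => bform W x u * bform W y v)
    + Delta_ev mul R y (fun u v => bform W u z * bform W x v)
    - Delta_ev mul R y (fun u v => bform W x u * bform W v z) = 0.

Definition Nop (R W : 'M[K]_n) (x : V) : V :=
  \sum_a \sum_b R a b * bform W x (e a) *: e b.

Definition nijenhuis (mul : V -> V -> V) (N : V -> V) : Prop :=
  forall x y, mul (N x) (N y) + N (N (mul x y)) = N (mul (N x) y) + N (mul x (N y)).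

End PermDefs.

Definition symmetric_tensor (K : fieldType) (n : nat) (R : 'M[K]_n) : Prop :=
  R^T = R.

(** N is self-adjoint for ω, since N(x) = ω(x, r¹) r² contracts the symmetric
    tensor r with the symmetric form ω.  Pairing the classical perm Yang–Baxter
    equation with ω(x,·) ⊗ ω(y,·) on its first two legs writes N(x)N(y) as
    φ(r¹) r² for an explicit functional φ; the Nijenhuis identity thereby
    becomes an identity between functionals evaluated at r¹, and that identity
    holds pointwise by the co-perm Yang–Baxter equation for ω together with the
    symplectic condition at (x, y, N u). *)

From HB Require Import structures.
From mathcomp Require Import all_boot all_order all_algebra.
From mathcomp Require Import ring.
Set Implicit Arguments. Unset Strict Implicit. Unset Printing Implicit Defensive.
Import GRing.Theory.
Local Open Scope ring_scope.

Lemma bform_is_bilinear (K : fieldType) (n : nat) (W : 'M[K]_n) :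
  bilinear_for (GRing.Scale.Law.clone _ _ *%R _) (GRing.Scale.Law.clone _ _ *%R _)
    (bform W).
Proof.
split=> [u|u] a x y; rewrite /bform.
- by rewrite !mulmxDl -!scalemxAl !mxE.
- by rewrite linearP mulmxDr -scalemxAr !mxE.
Qed.

HB.instance Definition _ (K : fieldType) (n : nat) (W : 'M[K]_n) :=
  bilinear_isBilinear.Build K 'rV[K]_n 'rV[K]_n K _ _ (bform W) (bform_is_bilinear W).

Lemma bformC (K : fieldType) (n : nat) (W : 'M[K]_n) :
  W^T = W -> forall x y, bform W x y = bform W y x.
Proof.
move=> W_sym x y; rewrite /bform.
have -> : (x *m W *m y^T) 0 0 = ((x *m W *m y^T)^T) 0 0 by rewrite [RHS]mxE.
by rewrite !trmx_mul trmxK W_sym mulmxA.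
Qed.

Lemma bformEr (K : fieldType) (n : nat) (W : 'M[K]_n) x y :
  bform W x y = \sum_i y 0 i * bform W x (delta_mx 0 i).
Proof.
by rewrite {1}(row_sum_delta y) linear_sumr; apply: eq_bigr => i _; rewrite linearZr.
Qed.

Lemma bilinear_prod_for (K : fieldType) (n : nat)
    (mul : 'rV[K]_n -> 'rV[K]_n -> 'rV[K]_n) :
  bilinear_prod mul ->
  bilinear_for (GRing.Scale.Law.clone _ _ *:%R _) (GRing.Scale.Law.clone _ _ *:%R _) mul.
Proof. by case=> mulDl mulDr; split=> [z|x] a u v; [apply: mulDl | apply: mulDr]. Qed.

Lemma exchange_big22 (T : nmodType) (I J : finType) (F : I -> I -> J -> J -> T) :
  \sum_a \sum_b \sum_c \sum_d F a b c d = \sum_c \sum_d \sum_a \sum_b F a b c d.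
Proof.
rewrite (eq_bigr _ (fun a _ => exchange_big _ _ _ _ _ _)) exchange_big.
by apply: eq_bigr => c _; rewrite (eq_bigr _ (fun a _ => exchange_big _ _ _ _ _ _)) exchange_big.
Qed.

Lemma scalar_sum (K : fieldType) (n : nat) (g : 'rV[K]_n -> K) : scalar g ->
  forall (I : Type) (r : seq I) (P : pred I) (F : I -> 'rV[K]_n),
  g (\sum_(i <- r | P i) F i) = \sum_(i <- r | P i) g (F i).
Proof.
move=> g_lin; exact: (linear_sum (HB.pack g (GRing.isLinear.Build _ _ _ _ g g_lin)
  : {scalar 'rV[K]_n})).
Qed.

Lemma scalarZ (K : fieldType) (n : nat) (g : 'rV[K]_n -> K) : scalar g ->
  forall c u, g (c *: u) = c * g u.
Proof.
move=> g_lin; exact: (linearZ_LR (HB.pack g (GRing.isLinear.Build _ _ _ _ g g_lin)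
  : {scalar 'rV[K]_n})).
Qed.

Section Contractions.
Variables (K : fieldType) (n : nat) (R W : 'M[K]_n).
Local Notation V := 'rV[K]_n.
Local Notation e := (@e K n).
Local Notation w := (bform W).
Local Notation N := (Nop R W).

(* With r = Σ R a b e_a ⊗ e_b: [rpair f g] is (f ⊗ g)(r) and [rcontr f] is f(r¹) r². *)
Definition rpair (f g : V -> K) : K := \sum_a \sum_b R a b * (f (e a) * g (e b)).

Definition rcontr (f : V -> K) : V := \sum_a \sum_b (R a b * f (e a)) *: e b.

Lemma rpairC : symmetric_tensor R -> forall f g, rpair f g = rpair g f.
Proof.
move=> R_sym f g; rewrite /rpair exchange_big; apply: eq_bigr => a _.
by apply: eq_bigr => b _; rewrite -[in LHS]R_sym mxE [f _ * _]mulrC.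
Qed.

Lemma eq_rcontr f g : f =1 g -> rcontr f = rcontr g.
Proof. by move=> fg; apply: eq_bigr => a _; apply: eq_bigr => b _; rewrite fg. Qed.

Lemma rcontrD f g : rcontr f + rcontr g = rcontr (f \+ g).
Proof.
rewrite /rcontr -big_split /=; apply: eq_bigr => a _; rewrite -big_split /=.
by apply: eq_bigr => b _; rewrite /= -scalerDl mulrDr.
Qed.

Lemma rcontrB f g : rcontr f - rcontr g = rcontr (f \- g).
Proof.
rewrite /rcontr -sumrB; apply: eq_bigr => a _; rewrite -sumrB.
by apply: eq_bigr => b _; rewrite -scalerBl mulrBr.
Qed.

Lemma NopE x : N x = rcontr (w x).
Proof. by []. Qed.

Lemma scalar_bform x : scalar (w x).
Proof. by move=> c u v; rewrite linearPr. Qed.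

Lemma rpair_bform z g : scalar g -> rpair (w z) g = g (N z).
Proof.
move=> g_lin; rewrite /Nop scalar_sum //; apply: eq_bigr => a _.
rewrite scalar_sum //; apply: eq_bigr => b _.
by rewrite scalarZ // mulrA.
Qed.

Lemma rpair_bformr z f : symmetric_tensor R -> scalar f -> rpair f (w z) = f (N z).
Proof. by move=> R_sym f_lin; rewrite rpairC ?rpair_bform. Qed.

Lemma Nop_adjoint : W^T = W -> symmetric_tensor R ->
  forall u v, w (N u) v = w u (N v).
Proof.
move=> W_sym R_sym u v.
rewrite bformC // -(rpair_bform u (scalar_bform v)) rpairC //.
exact/rpair_bform/scalar_bform.
Qed.

Definition contract12 (x y : V) (T : 'I_n -> 'I_n -> 'I_n -> K) : V :=
  \sum_s (\sum_p \sum_q w x (e p) * w y (e q) * T p q s) *: e s.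

Lemma contract12_t3 x y u v z : contract12 x y (t3 u v z) = (w x u * w y v) *: z.
Proof.
rewrite [in RHS](row_sum_delta z) scaler_sumr; apply: eq_bigr => s _.
rewrite scalerA (bformEr W x u) (bformEr W y v) mulr_suml; congr (_ *: _).
rewrite mulr_suml; apply: eq_bigr => p _.
rewrite mulr_sumr mulr_suml; apply: eq_bigr => q _; rewrite /t3; ring.
Qed.

Lemma contract12_sum x y (T : 'I_n -> 'I_n -> 'I_n -> 'I_n -> K) :
  contract12 x y (fun p q s => \sum_i T i p q s) = \sum_i contract12 x y (T i).
Proof.
rewrite /contract12 [RHS]exchange_big; apply: eq_bigr => s _; rewrite -scaler_suml.
congr (_ *: _); rewrite [RHS]exchange_big; apply: eq_bigr => p _.
by rewrite [RHS]exchange_big; apply: eq_bigr => q _; rewrite mulr_sumr.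
Qed.

Lemma contract12Z x y c (T : 'I_n -> 'I_n -> 'I_n -> K) :
  contract12 x y (fun p q s => c * T p q s) = c *: contract12 x y T.
Proof.
rewrite scaler_sumr; apply: eq_bigr => s _; rewrite scalerA mulr_sumr.
congr (_ *: _); apply: eq_bigr => p _; rewrite mulr_sumr.
by apply: eq_bigr => q _; ring.
Qed.

Lemma contract12D x y (A B : 'I_n -> 'I_n -> 'I_n -> K) :
  contract12 x y (fun p q s => A p q s + B p q s) = contract12 x y A + contract12 x y B.
Proof.
rewrite -big_split /=; apply: eq_bigr => s _; rewrite -scalerDl -big_split /=.
congr (_ *: _); apply: eq_bigr => p _; rewrite -big_split /=.
by apply: eq_bigr => q _; ring.
Qed.

Lemma contract12B x y (A B : 'I_n -> 'I_n -> 'I_n -> K) :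
  contract12 x y (fun p q s => A p q s - B p q s) = contract12 x y A - contract12 x y B.
Proof.
rewrite -sumrB; apply: eq_bigr => s _; rewrite -scalerBl -sumrB.
congr (_ *: _); apply: eq_bigr => p _; rewrite -sumrB.
by apply: eq_bigr => q _; ring.
Qed.

Lemma contract12_eq0 x y (T : 'I_n -> 'I_n -> 'I_n -> K) :
  (forall p q s, T p q s = 0) -> contract12 x y T = 0.
Proof.
move=> T0; rewrite /contract12 big1 // => s _.
by rewrite big1 ?scale0r // => p _; rewrite big1 // => q _; rewrite T0 mulr0.
Qed.

Lemma contract12_sum4_t3 x y (G : 'I_n -> 'I_n -> 'I_n -> 'I_n -> K)
    (U U' Z : 'I_n -> 'I_n -> 'I_n -> 'I_n -> V) :
  contract12 x y (fun p q s => \sum_a \sum_b \sum_c \sum_d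
     G a b c d * t3 (U a b c d) (U' a b c d) (Z a b c d) p q s)
  = \sum_a \sum_b \sum_c \sum_d
     (G a b c d * (w x (U a b c d) * w y (U' a b c d))) *: Z a b c d.
Proof.
rewrite contract12_sum; apply: eq_bigr => a _.
rewrite contract12_sum; apply: eq_bigr => b _.
rewrite contract12_sum; apply: eq_bigr => c _.
rewrite contract12_sum; apply: eq_bigr => d _.
by rewrite contract12Z contract12_t3 scalerA.
Qed.

End Contractions.

Section Nijenhuis.
Variables (K : fieldType) (n : nat).
Local Notation V := 'rV[K]_n.
Local Notation e := (@e K n).
Variables (mul : {bilinear V -> V -> V}) (W R : 'M[K]_n).
Hypotheses (W_sym : W^T = W) (R_sym : symmetric_tensor R).
Local Notation w := (bform W).
Local Notation N := (Nop R W).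
Let wC := bformC W_sym.

Lemma scalar_bform_mulr a x : scalar (fun u => w a (mul x u)).
Proof. by move=> c u v /=; rewrite !linearPr. Qed.

Lemma scalar_bform_mull a x : scalar (fun u => w a (mul u x)).
Proof. by move=> c u v /=; rewrite linearPl linearPr. Qed.

#[local] Hint Resolve scalar_bform_mulr scalar_bform_mull : core.

(* Stated up to [=1] so that it absorbs either argument order of ω. *)
Lemma Delta_ev_bform x a b f g : f =1 w a -> g =1 w b ->
  Delta_ev mul R x (fun u v => f u * g v)
  = w a (mul x (N b)) + w b (mul x (N a)) - w b (mul (N a) x).
Proof.
move=> fE gE.
have -> : Delta_ev mul R x (fun u v => f u * g v) =
    rpair R (fun u => w a (mul x u)) (w b) + rpair R (w a) (fun v => w b (mul x v))
    - rpair R (w a) (fun v => w b (mul v x)).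
  rewrite /Delta_ev /rpair -big_split -sumrB /=; apply: eq_bigr => i _.
  by rewrite -big_split -sumrB /=; apply: eq_bigr => j _; rewrite !fE !gE; ring.
by rewrite rpair_bformr ?rpair_bform.
Qed.

Hypothesis coybe : CcoPYBE mul R W.

Lemma CcoPYBE_bform x y z :
  w z (mul x (N y)) + w y (mul x (N z)) - w y (mul (N z) x)
  - w x (mul z (N y)) - w y (mul z (N x)) + w y (mul (N x) z)
  - w x (mul (N z) y) + w z (mul (N x) y) = 0.
Proof.
rewrite -(coybe x y z) (Delta_ev_bform x (wC^~ z) (wC^~ y)).
rewrite (Delta_ev_bform z (frefl _) (frefl _)) (Delta_ev_bform y (wC^~ z) (frefl _)).
by rewrite (Delta_ev_bform y (frefl _) (wC^~ z)); ring.
Qed.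

Hypothesis compat : forall x y z,
  w (mul x y) z + w (mul x z) y = w (mul z x) y + w (mul z y) x.

Lemma nijenhuis_bform x y u :
  w x (mul u (N y)) + w y (mul u (N x)) - w y (mul (N x) u) + w (N (mul x y)) u
  = w (mul (N x) y) u + w (mul x (N y)) u.
Proof.
have coYBE := CcoPYBE_bform x y u.
have compat_Nu : w (mul x y) (N u) + w (mul x (N u)) y
    - (w (mul (N u) x) y + w (mul (N u) y) x) = 0 by rewrite compat subrr.
(* The difference of the two sides is [compat_Nu - coYBE]. *)
rewrite Nop_adjoint //; apply/eqP; rewrite -subr_eq0 -(subrr 0) -{1}compat_Nu -{1}coYBE.
by apply/eqP; rewrite !(wC u) !(wC y) !(wC x); ring.
Qed.

Hypothesis ybe : CPYBE mul R.

Lemma contract12_r13r12 x y :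
  contract12 W x y (r13r12 mul R) = rcontr R (fun u => w x (mul u (N y))).
Proof.
rewrite /r13r12 contract12_sum4_t3; apply: eq_bigr => a _; apply: eq_bigr => b _.
rewrite -(rpair_bformr W y R_sym (scalar_bform_mulr x (e a))).
rewrite mulr_sumr scaler_suml; apply: eq_bigr => c _.
by rewrite mulr_sumr scaler_suml; apply: eq_bigr => d _; congr (_ *: _); ring.
Qed.

Lemma contract12_r13r23 x y : contract12 W x y (r13r23 mul R) = mul (N x) (N y).
Proof.
rewrite /r13r23 contract12_sum4_t3 /Nop linear_sumlz; apply: eq_bigr => a _.
rewrite linear_sumlz; apply: eq_bigr => b _; rewrite linearZl /= linear_sumr scaler_sumr.
apply: eq_bigr => c _; rewrite linear_sumr scaler_sumr; apply: eq_bigr => d _.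
by rewrite linearZr /= scalerA; congr (_ *: _); ring.
Qed.

Lemma contract12_r23r12 x y :
  contract12 W x y (r23r12 mul R) = rcontr R (fun u => w y (mul u (N x))).
Proof.
rewrite /r23r12 contract12_sum4_t3; apply: eq_bigr => a _; apply: eq_bigr => b _.
rewrite -(rpair_bform R W x (scalar_bform_mulr y (e a))).
rewrite mulr_sumr scaler_suml; apply: eq_bigr => c _.
by rewrite mulr_sumr scaler_suml; apply: eq_bigr => d _; congr (_ *: _); ring.
Qed.

Lemma contract12_r12r23 x y :
  contract12 W x y (r12r23 mul R) = rcontr R (fun u => w y (mul (N x) u)).
Proof.
rewrite /r12r23 contract12_sum4_t3 exchange_big22; apply: eq_bigr => c _.
apply: eq_bigr => d _; rewrite -(rpair_bform R W x (scalar_bform_mull y (e c))).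
rewrite mulr_sumr scaler_suml; apply: eq_bigr => a _.
by rewrite mulr_sumr scaler_suml; apply: eq_bigr => b _; congr (_ *: _); ring.
Qed.

Lemma mulN_rcontr x y : mul (N x) (N y) =
  rcontr R (fun u => w x (mul u (N y))) + rcontr R (fun u => w y (mul u (N x)))
  - rcontr R (fun u => w y (mul (N x) u)).
Proof.
have := contract12_eq0 W x y ybe.
rewrite contract12B contract12D contract12B.
rewrite contract12_r13r12 contract12_r13r23 contract12_r23r12 contract12_r12r23.
move=> /eqP; rewrite subr_eq0 => /eqP <-.
by rewrite opprD opprB addrACA subrr addr0 addrC subrK.
Qed.

Lemma Nop_nijenhuis : nijenhuis mul N.
Proof.
move=> x y; rewrite mulN_rcontr.
rewrite (NopE R W (N (mul x y))) (NopE R W (mul (N x) y)) (NopE R W (mul x (N y))).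
rewrite rcontrD rcontrB !rcontrD; apply: eq_rcontr => u /=.
exact: nijenhuis_bform.
Qed.

End Nijenhuis.

Theorem theorem3p9 (K : fieldType) (n : nat)
  (mul : 'rV[K]_n -> 'rV[K]_n -> 'rV[K]_n) (W R : 'M[K]_n) :
  perm_algebra mul ->
  symplectic mul W ->
  symmetric_tensor R ->
  CPYBE mul R ->
  CcoPYBE mul R W ->
  nijenhuis mul (Nop R W).
Proof.
move=> [mul_bil _] [W_sym compat] R_sym ybe coybe.
pose mulB : {bilinear _ -> _ -> _} :=
  HB.pack mul (bilinear_isBilinear.Build _ _ _ _ _ _ mul (bilinear_prod_for mul_bil)).
exact: (@Nop_nijenhuis K n mulB W R W_sym R_sym coybe compat ybe).
Qed.
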